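(* Let $K$ be a number field and let $A=A_1\cdots A_n$ with $A_1,\ldots,A_n\in M_d(K)$. Suppose there exists $r\ge0$ such that $\operatorname{rank}(A)=\operatorname{rank}(A_iA_{i+1})=r$ for all $i\in[1,n-1]$. (1) There exists a subproduct $A'\coloneqq A_{i_1}\cdots A_{i_k}$ with $1=i_1<i_2<\cdots<i_{k-1}<i_k=n$ such that $A\parallel A'$ and $k\le\binom{d}{r}+3$. (2) If $n\ge 2\binom{d}{r}+4$, then there are $1\le k<l\le n$ such that $A_k\cdots A_l$ is completely pseudo-regular of rank $r$.
   Context: For $A,B\in M_d(K)$, write $A\parallel B$ if $\operatorname{im}(A)=\operatorname{im}(B)$ and $\ker(A)=\ker(B)$. A matrix is completely pseudo-regular if it is contained in a subgroup of the multiplicative semigroup $M_d(K)$; equivalently, $\operatorname{im}(C)\cap\ker(C)=0$. *)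

From HB Require Import structures.
From mathcomp Require Import all_boot all_order all_algebra all_field.
Set Implicit Arguments. Unset Strict Implicit. Unset Printing Implicit Defensive.
Import GRing.Theory.
Local Open Scope ring_scope.

(* Matrices act on COLUMN vectors: im A = {A x}, ker A = {x | A x = 0}.
   In mathcomp's row-vector conventions, im A is the row space of A^T and
   ker A is the row space of kermx A^T. *)

Definition mxprod (F : fieldType) (d : nat) (s : seq 'M[F]_d) : 'M[F]_d :=
  foldr (@mulmx F d d d) 1%:M s.

(* A_k A_(k+1) ... A_l  (indices k..l inclusive) *)
Definition subprod (F : fieldType) (d : nat) (A : nat -> 'M[F]_d) (k l : nat) :
  'M[F]_d := mxprod [seq A i | i <- iota k (l.+1 - k)].

Definition mx_im (F : fieldType) (d : nat) (A : 'M[F]_d) : 'M[F]_d := A^T.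
Definition mx_ker (F : fieldType) (d : nat) (A : 'M[F]_d) : 'M[F]_d := kermx A^T.

Definition mx_parallel (F : fieldType) (d : nat) (A B : 'M[F]_d) : Prop :=
  (mx_im A == mx_im B)%MS /\ (mx_ker A == mx_ker B)%MS.

Definition completely_pseudo_regular (F : fieldType) (d : nat) (C : 'M[F]_d) : Prop :=
  (mx_im C :&: mx_ker C == (0 : 'M[F]_d))%MS.

(* Write L(M) for the matrix of all r x r minors of M and T(Q) for the r-fold
   tensor power of Q. Cauchy-Binet gives L(QP) = T(Q) L(P), L(M) is nonzero iff
   rank M >= r, and every column of L(P) is alternating in the row indices, so all
   of them lie in one space of dimension C(d, r). Hence if rank (Q_i P_i) >= r for
   i < m while rank (Q_i P_j) < r for i < j < m, the vectors L(P_j) form a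
   triangular family in that space and m <= C(d, r).

   (1) Write A = G M H with G = A_1 A_2 and H = A_(n-1) A_n, both of rank r. Every
   product G M' H of rank r has the image of G and the kernel of H, hence is
   parallel to A. While the middle word B_1 ... B_s has s >= C(d, r), the pairs
   (G B_1 ... B_i, B_(j+1) ... B_s H) violate the bound, so some block
   B_(i+1) ... B_j can be deleted without dropping the rank.

   (2) All blocks A_k ... A_l with k < l have rank r, so the square of such a block
   has the rank of (A_(l-1) A_l)(A_k A_(k+1)). Applying the bound to the
   C(d, r) + 1 pairs (A_(q-1) A_q, A_(q+1) A_(q+2)), q = 2, 4, ..., 2 C(d, r) + 2,
   taken from right to left, yields a block C with rank (C C) = rank C = r, which
   is then completely pseudo-regular. *)

From HB Require Import structures.
From mathcomp Require Import all_boot all_order all_algebra all_field.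
From mathcomp Require Import perm zify.
Import GRing.Theory.
Local Open Scope ring_scope.

Section Minors.
Context {F : fieldType}.

Lemma det_mulmx_ffun r d (X : 'M[F]_(r, d)) (Y : 'M[F]_(d, r)) :
  \det (X *m Y) =
    \sum_(c : {ffun 'I_r -> 'I_d}) (\prod_i X i (c i)) * \det (rowsub c Y).
Proof.
rewrite /determinant.
have expand_diag (s : {perm 'I_r}) : \prod_i (X *m Y) i (s i) =
    \sum_(c : {ffun 'I_r -> 'I_d}) \prod_i (X i (c i) * Y (c i) (s i)).
  by under eq_bigr do rewrite mxE; rewrite bigA_distr_bigA.
under eq_bigr => s _ do rewrite expand_diag mulr_sumr.
under [RHS]eq_bigr => c _ do rewrite mulr_sumr.
rewrite [RHS]exchange_big /=; apply: eq_bigr => s _; apply: eq_bigr => c _.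
rewrite big_split /= mulrCA; congr (_ * (_ * _)).
by apply: eq_bigr => i _; rewrite mxE.
Qed.

Lemma mxrank_mxsub m n m' n' (f : 'I_m' -> 'I_m) (g : 'I_n' -> 'I_n) (M : 'M[F]_(m, n)) :
  (\rank (mxsub f g M) <= \rank M)%N.
Proof.
rewrite mxsubrc; apply: leq_trans (mxrankS (rowsub_sub _ _)) _.
by rewrite -{1}[M]mulmx1 -mulmx_colsub mxrankM_maxl.
Qed.

Lemma row_free_rowsub_of_rank {m n r} (M : 'M[F]_(m, n)) : (r <= \rank M)%N ->
  exists f : 'I_r -> 'I_m, row_free (rowsub f M).
Proof.
move=> rM; exists (maxrankfun M \o widen_ord rM).
rewrite /row_free rowsub_comp rowsubE -pid_mxErow mxrankMfree ?maxrowsub_free //.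
by rewrite rank_pid_mx.
Qed.

Lemma unitmx_minor_of_rank {m n r} (M : 'M[F]_(m, n)) : (r <= \rank M)%N ->
  exists (f : 'I_r -> 'I_m) (g : 'I_r -> 'I_n), mxsub f g M \in unitmx.
Proof.
move=> rM; have [f freef] := row_free_rowsub_of_rank M rM.
have rMfT : (r <= \rank (rowsub f M)^T)%N by rewrite mxrank_tr (eqP freef).
have [g freeg] := row_free_rowsub_of_rank _ rMfT.
exists f, g; rewrite -unitmx_tr -row_free_unit trmx_mxsub.
by rewrite mxsubrc; move: freeg; rewrite trmx_mxsub.
Qed.

Definition match_mx {p q m} (f : 'I_p -> 'I_m) (g : 'I_q -> 'I_m) : 'M[F]_(p, q) :=
  \matrix_(i, k) (f i == g k)%:R.

Lemma match_mx_rowsub p q m n (f : 'I_p -> 'I_m) (g : 'I_q -> 'I_m) (M : 'M[F]_(m, n)) :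
  injective g -> (forall i, exists k, f i = g k) ->
  match_mx f g *m rowsub g M = rowsub f M.
Proof.
move=> g_inj f_in_g; apply/matrixP => i j; rewrite !mxE.
have [k fik] := f_in_g i; rewrite (bigD1 k) //= big1 => [|k' k'k].
  by rewrite !mxE fik eqxx mul1r addr0.
by rewrite !mxE fik (inj_eq g_inj) eq_sym (negPf k'k) mul0r.
Qed.

Lemma det_match_mx_eq0 {p m} (f g : 'I_p -> 'I_m) i :
  (forall k, f i != g k) -> \det (match_mx f g) = 0.
Proof.
move=> fi_notin_g; rewrite (expand_det_row _ i) big1 // => k _.
by rewrite mxE (negPf (fi_notin_g k)) mul0r.
Qed.
End Minors.

Section CompoundMatrix.
Variables (F : fieldType) (r d : nat).

Local Notation index_fun := {ffun 'I_r -> 'I_d}.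
Local Notation N := #|{: index_fun}|.

Definition compound_index (a : 'I_N) : 'I_r -> 'I_d := enum_val a : index_fun.

(* Minors are indexed by all maps 'I_r -> 'I_d rather than by r-subsets, so that
   Cauchy-Binet is a plain expansion; non-injective index maps give zero minors. *)
Definition compound_mx (M : 'M[F]_d) : 'M[F]_N :=
  \matrix_(a, b) \det (mxsub (compound_index a) (compound_index b) M).

Definition tensor_pow_mx (Q : 'M[F]_d) : 'M[F]_N :=
  \matrix_(a, c) \prod_i Q (compound_index a i) (compound_index c i).

Lemma compound_mxM (Q P : 'M[F]_d) :
  compound_mx (Q *m P) = tensor_pow_mx Q *m compound_mx P.
Proof.
apply/matrixP => a b; rewrite !mxE mxsub_mul det_mulmx_ffun.
rewrite (eq_bigl (mem {: index_fun})) // big_enum_val; apply: eq_bigr => c _.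
rewrite !mxE -mxsubrc; congr (_ * _).
by apply: eq_bigr => i _; rewrite mxE.
Qed.

Lemma compound_mx_eq0 (M : 'M[F]_d) : (compound_mx M == 0) = (\rank M < r)%N.
Proof.
apply/eqP/idP => [M0|rM].
  rewrite ltnNge; apply/negP => /unitmx_minor_of_rank [f [g]].
  pose a := enum_rank [ffun i => f i]; pose b := enum_rank [ffun i => g i].
  have /matrixP/(_ a b) := M0; rewrite !mxE.
  have -> : mxsub (compound_index a) (compound_index b) M = mxsub f g M.
    by apply: eq_mxsub => i; rewrite /compound_index enum_rankK ffunE.
  by rewrite unitmxE => ->; rewrite unitr0.
apply/matrixP => a b; rewrite !mxE; apply/eqP; apply: contraTT rM => /negPf minor_nz.
have unit_minor : mxsub (compound_index a) (compound_index b) M \in unitmx.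
  by rewrite unitmxE unitfE minor_nz.
by rewrite -leqNgt -(mxrank_unit unit_minor) mxrank_mxsub.
Qed.

Hypothesis le_rd : (r <= d)%N.

Definition r_subsets : {set {set 'I_d}} := [set S : {set 'I_d} | #|S| == r].

Definition enum_subset (S : {set 'I_d}) (j : 'I_r) : 'I_d :=
  nth (widen_ord le_rd j) (enum S) j.

Section EnumSubset.
Context {S : {set 'I_d}} (cardS : #|S| = r).

Lemma enum_subset_in j : enum_subset S j \in S.
Proof. by rewrite /enum_subset -mem_enum mem_nth // -cardE cardS. Qed.

Lemma enum_subset_inj : injective (enum_subset S).
Proof.
move=> j k; rewrite /enum_subset => ejk; apply/val_inj/eqP.
have [jS kS] : (j < size (enum S))%N /\ (k < size (enum S))%N by rewrite -cardE cardS.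
move: ejk; rewrite (set_nth_default (widen_ord le_rd j) _ kS) => /eqP.
by rewrite nth_uniq // enum_uniq.
Qed.

Lemma enum_subset_onto x : x \in S -> exists j, enum_subset S j = x.
Proof.
move=> xS; have ix : (index x (enum S) < r)%N by rewrite -cardS cardE index_mem mem_enum.
by exists (Ordinal ix); rewrite /enum_subset nth_index ?mem_enum.
Qed.
End EnumSubset.

Lemma det_mxsub_sum_subsets (f h : 'I_r -> 'I_d) (P : 'M[F]_d) :
  \det (mxsub f h P) = \sum_(S in r_subsets)
     \det (match_mx f (enum_subset S)) * \det (mxsub (enum_subset S) h P).
Proof.
have term S : S \in r_subsets ->
    \det (match_mx f (enum_subset S)) * \det (mxsub (enum_subset S) h P)
    = if [forall i, f i \in S] then \det (mxsub f h P) else 0.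
  rewrite inE => /eqP cardS; case: ifP => [/forallP fS | /negbT/forallPn [i fiS]].
    rewrite -det_mulmx mxsubrc [mxsub f _ _]mxsubrc match_mx_rowsub //.
      exact: enum_subset_inj cardS.
    by move=> i; have [k <-] := enum_subset_onto cardS _ (fS i); exists k.
  rewrite (det_match_mx_eq0 _ _ i) ?mul0r // => k.
  by apply: contraNneq fiS => ->; apply: enum_subset_in cardS _.
have [/injectiveP f_inj | /injectivePn [i1 [i2 i12 f12]]] := boolP (injectiveb f).
  pose S0 := [set f i | i in 'I_r].
  have cardS0 : #|S0| = r by rewrite card_imset // card_ord.
  have S0r : S0 \in r_subsets by rewrite inE cardS0.
  rewrite (bigD1 S0) //= term // big1 ?addr0 => [|S /andP [Sr SS0]].
    by case: forallP => // -[] i; apply: imset_f.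
  rewrite term //; case: forallP => // fS; case/negP: SS0; rewrite eq_sym eqEcard.
  move: Sr; rewrite inE => /eqP ->; rewrite cardS0 leqnn andbT.
  by apply/subsetP => _ /imsetP [i _ ->].
have minor0 : \det (mxsub f h P) = 0.
  by apply: (determinant_alternate i12) => j; rewrite !mxE f12.
by rewrite minor0 big1 // => S Sr; rewrite term // minor0 if_same.
Qed.

(* Entry (S, a) is the sign with which compound_index a enumerates S, or 0 if
   its image is not S. *)
Definition alternation_mx : 'M[F]_(#|r_subsets|, N) :=
  \matrix_(s, a) \det (match_mx (compound_index a) (enum_subset (enum_val s))).

Lemma compound_mx_tr_sub (P : 'M[F]_d) : ((compound_mx P)^T <= alternation_mx)%MS.
Proof.
pose W : 'M[F]_(N, #|r_subsets|) :=
  \matrix_(b, s) \det (mxsub (enum_subset (enum_val s)) (compound_index b) P).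
suff -> : (compound_mx P)^T = W *m alternation_mx by apply: submxMl.
apply/matrixP => b a; rewrite !mxE det_mxsub_sum_subsets big_enum_val.
by apply: eq_bigr => s _; rewrite !mxE mulrC.
Qed.

Lemma mxrank_alternation_mx : (\rank alternation_mx <= 'C(d, r))%N.
Proof. by apply: leq_trans (rank_leq_row _) _; rewrite card_draws card_ord. Qed.
End CompoundMatrix.

Arguments compound_mx {F} r {d} M.
Arguments tensor_pow_mx {F} r {d} Q.
Arguments mxrank_alternation_mx {F r d} le_rd.

Lemma mxrank_triangular_family (F : fieldType) n p (Z : 'M[F]_(p, n)) m
    (X Y : nat -> 'M[F]_n) :
  (forall j, (j < m)%N -> (X j <= Z)%MS) ->
  (forall i, (i < m)%N -> X i *m Y i != 0) ->
  (forall i j, (i < j < m)%N -> X j *m Y i = 0) ->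
  (m <= \rank Z)%N.
Proof.
move=> XZ XYii XYij.
pose U i := (\sum_(j < m | (i <= j)%N) X j)%MS.
have U_ltmx i : (i < m)%N -> (U i.+1 < U i)%MS.
  move=> im; have Ui_ker : (U i.+1 <= kermx (Y i))%MS.
    by apply/sumsmx_subP => j ij; apply/sub_kermxP/XYij; rewrite ij ltn_ord.
  rewrite ltmxE; apply/andP; split.
    by apply/sumsmx_subP => j ij; apply: (sumsmx_sup j) => //; apply: ltnW.
  apply: contra (XYii i im) => UiU; apply/eqP/sub_kermxP.
  apply: submx_trans Ui_ker; apply: submx_trans UiU.
  exact: (sumsmx_sup (Ordinal im)).
have rankU k : (k <= m)%N -> (k <= \rank (U (m - k)))%N.
  elim: k => [//|k IH] km.
  have lt_km : (m - k.+1 < m)%N by lia.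
  have := U_ltmx _ lt_km; rewrite ltmxErank => /andP[_].
  have -> : (m - k.+1).+1 = (m - k)%N by lia.
  by apply: leq_trans; rewrite ltnS IH // ltnW.
apply: leq_trans (rankU m (leqnn m)) _; rewrite subnn.
by apply: mxrankS; apply/sumsmx_subP => j _; apply: XZ.
Qed.

Section RankPairs.
Variables (F : fieldType) (d r m : nat) (Q P : nat -> 'M[F]_d).
Hypothesis rank_diag : forall i, (i < m)%N -> (r <= \rank (Q i *m P i))%N.

Lemma rank_pairs_le_binomial :
  (forall i j, (i < j < m)%N -> (\rank (Q i *m P j) < r)%N) -> (m <= 'C(d, r))%N.
Proof.
move=> rank_offdiag; have [-> // | m_gt0] := posnP m.
have le_rd : (r <= d)%N := leq_trans (rank_diag 0 m_gt0) (rank_leq_row _).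
apply: leq_trans (mxrank_alternation_mx (F := F) le_rd).
apply: (@mxrank_triangular_family _ _ _ _ _
          (fun j => (compound_mx r (P j))^T) (fun i => (tensor_pow_mx r (Q i))^T)).
- by move=> j _; apply: compound_mx_tr_sub.
- by move=> i im; rewrite -trmx_mul -compound_mxM trmx_eq0 compound_mx_eq0 -leqNgt rank_diag.
- move=> i j ijm; apply/eqP.
  by rewrite -trmx_mul -compound_mxM trmx_eq0 compound_mx_eq0 rank_offdiag.
Qed.

Lemma exists_rank_pair : ('C(d, r) < m)%N ->
  exists i j, (i < j < m)%N /\ (r <= \rank (Q i *m P j))%N.
Proof.
move=> m_big.
have [/existsP[i /existsP[j /andP[ij rij]]] | none] :=
  boolP [exists i : 'I_m, exists j : 'I_m, (i < j)%N && (r <= \rank (Q i *m P j))%N].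
  by exists i, j; rewrite ij ltn_ord.
suff : (m <= 'C(d, r))%N by rewrite leqNgt m_big.
apply: rank_pairs_le_binomial => i j /andP[ij jm]; rewrite ltnNge.
apply: contra none => rij; apply/existsP; exists (Ordinal (ltn_trans ij jm)).
by apply/existsP; exists (Ordinal jm); rewrite ij.
Qed.
End RankPairs.

Section Products.
Context {F : fieldType} {d : nat}.
Implicit Types (A : nat -> 'M[F]_d) (C G H M P Q X Y : 'M[F]_d).

Lemma mxprod_cat (s1 s2 : seq 'M[F]_d) : mxprod (s1 ++ s2) = mxprod s1 *m mxprod s2.
Proof. by elim: s1 => [|B s1 IH] /=; rewrite ?mul1mx // IH mulmxA. Qed.

Lemma subprod_split A k m l : (k <= m.+1)%N -> (m <= l)%N ->
  subprod A k l = subprod A k m *m subprod A m.+1 l.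
Proof.
move=> km ml; rewrite /subprod -mxprod_cat -map_cat.
have -> : (l.+1 - k = (m.+1 - k) + (l.+1 - m.+1))%N by lia.
by rewrite iotaD; congr (mxprod (map A (_ ++ iota _ _))); lia.
Qed.

Lemma subprod_pair A k : subprod A k k.+1 = A k *m A k.+1.
Proof. by rewrite /subprod subSn // subSnn /= mulmx1. Qed.

Lemma mxrank_mulmx_absorbl X Q M :
  \rank (X *m Q) = \rank Q -> \rank (X *m Q *m M) = \rank (Q *m M).
Proof.
move=> rXQ; apply/eqmx_rank/eqmxP/eqmxMr/eqmxP.
by case: (mxrank_leqif_eq (submxMl X Q)) => _ <-; rewrite rXQ.
Qed.

Lemma mxrank_mulmx_absorbr M P Y :
  \rank (P *m Y) = \rank P -> \rank (M *m P *m Y) = \rank (M *m P).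
Proof.
move=> rPY; rewrite -mxrank_tr -[RHS]mxrank_tr !trmx_mul mulmxA.
by rewrite mxrank_mulmx_absorbl // -trmx_mul !mxrank_tr.
Qed.

Lemma mx_im_mulmx_eq G M :
  (\rank G <= \rank (G *m M))%N -> (mx_im (G *m M) == mx_im G)%MS.
Proof.
move=> rGM; have sub : (mx_im (G *m M) <= mx_im G)%MS by rewrite /mx_im trmx_mul submxMl.
case: (mxrank_leqif_eq sub) => _ <-.
by rewrite /mx_im !mxrank_tr eqn_leq rGM mxrankM_maxl.
Qed.

Lemma mx_ker_mulmx_eq M H :
  (\rank H <= \rank (M *m H))%N -> (mx_ker (M *m H) == mx_ker H)%MS.
Proof.
move=> rMH; have sub : (mx_ker H <= mx_ker (M *m H))%MS.
  by apply/sub_kermxP; rewrite trmx_mul mulmxA (sub_kermxP (submx_refl _)) mul0mx.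
apply/eqmxP/eqmx_sym/eqmxP; case: (mxrank_leqif_eq sub) => _ <-.
rewrite /mx_ker !mxrank_ker !mxrank_tr.
by suff -> : \rank (M *m H) = \rank H by []; apply/eqP; rewrite eqn_leq rMH mxrankM_maxr.
Qed.

Lemma mx_parallel_sandwich r G X Y H :
  \rank G = r -> \rank H = r ->
  (r <= \rank (G *m X *m H))%N -> (r <= \rank (G *m Y *m H))%N ->
  mx_parallel (G *m X *m H) (G *m Y *m H).
Proof.
move=> rG rH rX rY.
have im_eq M : (r <= \rank (G *m M *m H))%N -> (mx_im (G *m M *m H) :=: mx_im G)%MS.
  by move=> rM; apply/eqmxP; rewrite -mulmxA mx_im_mulmx_eq // rG mulmxA.
have ker_eq M : (r <= \rank (G *m M *m H))%N -> (mx_ker (G *m M *m H) :=: mx_ker H)%MS.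
  by move=> rM; apply/eqmxP; rewrite mx_ker_mulmx_eq // rH.
split; apply/eqmxP.
  exact: eqmx_trans (im_eq _ rX) (eqmx_sym (im_eq _ rY)).
exact: eqmx_trans (ker_eq _ rX) (eqmx_sym (ker_eq _ rY)).
Qed.

Lemma completely_pseudo_regular_rank_sqr C :
  (\rank C <= \rank (C *m C))%N -> completely_pseudo_regular C.
Proof.
move=> rCC; rewrite /completely_pseudo_regular /mx_im /mx_ker.
have := mxrank_mul_ker C^T C^T; rewrite -trmx_mul !mxrank_tr => rank_sum.
have : \rank (C^T :&: kermx C^T)%MS == 0%N.
  by rewrite -(eqn_add2l (\rank (C *m C))) addn0 rank_sum eqn_leq rCC mxrankM_maxl.
by rewrite mxrank_eq0 => /eqP ->; rewrite submx_refl.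
Qed.
End Products.

Lemma short_subseq_rank {F : fieldType} {d : nat} {T : eqType} r (B : T -> 'M[F]_d)
    (G H : 'M[F]_d) (t : seq T) :
  (r <= \rank (G *m mxprod (map B t) *m H))%N ->
  exists2 t', subseq t' t &
    (size t' < 'C(d, r))%N /\ (r <= \rank (G *m mxprod (map B t') *m H))%N.
Proof.
have [k] := ubnP (size t); elim: k t => // k IH t /ltnSE size_t rt.
have [small | big] := ltnP (size t) 'C(d, r); first by exists t.
pose Q i := G *m mxprod (map B (take i t)).
pose P j := mxprod (map B (drop j t)) *m H.
have QP i j : Q i *m P j = G *m mxprod (map B (take i t ++ drop j t)) *m H.
  by rewrite /Q /P map_cat mxprod_cat !mulmxA.
have [i [j [/andP[ij jt] rij]]] : exists i j,
    (i < j < (size t).+1)%N /\ (r <= \rank (Q i *m P j))%N.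
  by apply: exists_rank_pair => [i _ | ]; rewrite ?ltnS // QP cat_take_drop.
have sub_t : subseq (take i t ++ drop j t) t.
  rewrite -[X in subseq _ X](cat_take_drop i t) cat_subseq //.
  by rewrite -(subnK (ltnW ij)) -drop_drop drop_subseq.
have size_lt : (size (take i t ++ drop j t) < k)%N.
  rewrite size_cat size_drop size_takel; lia.
have [t' sub_t' short_t'] := IH _ size_lt (ltac:(by rewrite -QP)).
by exists t' => //; apply: subseq_trans sub_t.
Qed.

Lemma iota1_frame n : (4 <= n)%N ->
  iota 1 n = ([:: 1; 2] ++ iota 3 (n - 4) ++ [:: n.-1; n])%N.
Proof.
move=> n_ge4; have [m ->] : exists m, n = m.+4 by exists (n - 4)%N; lia.
have -> : iota 1 m.+4 = iota 1 (2 + (m + 2)) by congr iota; lia.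
by rewrite !subSS subn0 !iotaD.
Qed.

Section ConstantRankChain.
Variables (F : fieldType) (d n r : nat) (A : nat -> 'M[F]_d).
Hypothesis rank_prod : \rank (subprod A 1 n) = r.
Hypothesis rank_pairs : forall i, (1 <= i < n)%N -> \rank (A i *m A i.+1) = r.

Lemma rank_subprod k l :
  (1 <= k)%N -> (k < l)%N -> (l <= n)%N -> \rank (subprod A k l) = r.
Proof.
move=> k_ge1 kl ln; apply/eqP; rewrite eqn_leq; apply/andP; split.
  rewrite (subprod_split A _ k.+1); [|lia|lia].
  apply: leq_trans (mxrankM_maxl _ _) _.
  by rewrite subprod_pair rank_pairs //; lia.
rewrite -[X in (X <= _)%N]rank_prod (subprod_split A _ k.-1) ?prednK //; try lia.
apply: leq_trans (mxrankM_maxr _ _) _.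
by rewrite (subprod_split A _ l) //; [apply: mxrankM_maxl | lia].
Qed.

Lemma rank_subprod_sqr k l : (1 <= k)%N -> (k < l)%N -> (l <= n)%N ->
  \rank (subprod A k l *m subprod A k l) =
  \rank (subprod A l.-1 l *m subprod A k k.+1).
Proof.
move=> k_ge1 kl ln.
have split_last : subprod A k l = subprod A k l.-2 *m subprod A l.-1 l.
  have -> : l.-1 = l.-2.+1 by lia.
  by apply: subprod_split; lia.
have split_first : subprod A k l = subprod A k k.+1 *m subprod A k.+2 l.
  by apply: subprod_split; lia.
rewrite {1}split_last {1}split_first mxrank_mulmx_absorbl; last first.
  by rewrite -split_last !rank_subprod //; lia.
by rewrite mulmxA mxrank_mulmx_absorbr // -split_first !rank_subprod //; lia.
Qed.

Lemma exists_short_parallel_subproduct : (0 < n)%N ->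
  exists s : seq nat,
    [/\ sorted ltn s, head 0%N s = 1%N, last 0%N s = n,
        mx_parallel (subprod A 1 n) (mxprod [seq A i | i <- s])
      & (size s <= 'C(d, r) + 3)%N].
Proof.
move=> n_gt0; have [n_small | n_ge4] := ltnP n 4.
  exists (iota 1 n); split.
  - exact: iota_ltn_sorted.
  - by move: n_gt0; case: (n).
  - by move: n_gt0 n_small; case: (n) => [|[|[|[|]]]].
  - by rewrite /subprod subSS subn0; split; rewrite submx_refl.
  - by rewrite size_iota; lia.
pose G := A 1%N *m A 2%N; pose H := A n.-1 *m A n.
have frame t : mxprod [seq A i | i <- [:: 1; 2] ++ t ++ [:: n.-1; n]]%N =
               G *m mxprod [seq A i | i <- t] *m H.
  by rewrite !map_cat !mxprod_cat /= !mulmx1 !mulmxA.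
pose t0 := iota 3 (n - 4).
have iota_frame := iota1_frame _ n_ge4.
have rank_G : \rank G = r by rewrite /G -subprod_pair rank_subprod //; lia.
have rank_H : \rank H = r.
  by rewrite /H -[in A n](prednK n_gt0) -subprod_pair rank_subprod ?prednK //; lia.
have prod_t0 : subprod A 1 n = G *m mxprod [seq A i | i <- t0] *m H.
  by rewrite /subprod subSS subn0 iota_frame frame.
have rank_t0 : (r <= \rank (G *m mxprod [seq A i | i <- t0] *m H))%N.
  by rewrite -prod_t0 rank_prod.
have [t' sub_t' [short_t' rank_t']] := short_subseq_rank r A G H t0 rank_t0.
exists ([:: 1; 2] ++ t' ++ [:: n.-1; n])%N.
have sub_iota : subseq ([:: 1; 2] ++ t' ++ [:: n.-1; n])%N (iota 1 n).
  by rewrite iota_frame !cat_subseq.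
split.
- exact: (subseq_sorted ltn_trans sub_iota (iota_ltn_sorted 1 n)).
- by [].
- by rewrite !last_cat.
- by rewrite frame prod_t0; apply: mx_parallel_sandwich rank_G rank_H rank_t0 rank_t'.
- by rewrite !size_cat /= add2n addn2 addn3 !ltnS.
Qed.

Lemma exists_completely_pseudo_regular_subprod : (2 * 'C(d, r) + 4 <= n)%N ->
  exists k l : nat,
    [/\ (1 <= k)%N, (k < l)%N, (l <= n)%N,
        completely_pseudo_regular (subprod A k l) & \rank (subprod A k l) = r].
Proof.
move=> n_big; set N := 'C(d, r) in n_big.
pose q t := (2 * (N - t)).+2.
pose Q t := subprod A (q t).-1 (q t); pose P t := subprod A (q t).+1 (q t).+2.
have [i [j [/andP[ij jN] rQP]]] : exists i j,
    (i < j < N.+1)%N /\ (r <= \rank (Q i *m P j))%N.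
  apply: exists_rank_pair => [t tN|//].
  by rewrite /Q /P -subprod_split ?rank_subprod //; rewrite /q; lia.
have kl : ((q j).+1 < q i)%N by rewrite /q; lia.
have ln : (q i <= n)%N by rewrite /q; lia.
exists (q j).+1, (q i); split => //.
- apply: completely_pseudo_regular_rank_sqr.
  by rewrite rank_subprod_sqr // rank_subprod.
- exact: rank_subprod.
Qed.
End ConstantRankChain.

Theorem lemmaV10 (K : fieldExtType rat) (d n r : nat) (A : nat -> 'M[K]_d) :
  (0 < n)%N ->
  \rank (subprod A 1 n) = r ->
  (forall i : nat, (1 <= i < n)%N -> \rank (A i *m A i.+1) = r) ->
  (exists s : seq nat,
      [/\ sorted ltn s, head 0%N s = 1%N, last 0%N s = n,
          mx_parallel (subprod A 1 n) (mxprod [seq A i | i <- s])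
        & (size s <= 'C(d, r) + 3)%N])
  /\
  ((2 * 'C(d, r) + 4 <= n)%N ->
   exists k l : nat,
     [/\ (1 <= k)%N, (k < l)%N, (l <= n)%N,
         completely_pseudo_regular (subprod A k l)
       & \rank (subprod A k l) = r]).
Proof.
move=> n_gt0 rank_prod rank_pairs; split.
  exact: exists_short_parallel_subproduct.
exact: exists_completely_pseudo_regular_subprod.
Qed.
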